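(* Let $t\ge 2$, let $n_1,\dots,n_t$ be positive integers, and let $G=K_{n_1,\dots,n_t}$ be the complete $t$-partite graph with partite sets $V_1,\dots,V_t$, $|V_i|=n_i$. Let $N_t=\{1,\dots,t\}$ and $f(I)=\sum_{i\in I}n_i$ for $I\subseteq N_t$. Let $p$ be a positive integer with $f(N_t)>p$. Then $$\gamma_p(G)\le \min\{f(I): I\subseteq N_t,\ f(I)\ge p\},$$ with equality if $G$ has a $\gamma_p(G)$-set $D$ with $f(I_D)\ge p$.
   Context: A set $S\subseteq V(G)$ is a $p$-dominating set of $G$ if every vertex $v\in V(G)\setminus S$ has at least $p$ neighbors in $S$. The $p$-domination number $\gamma_p(G)$ is the minimum cardinality of a $p$-dominating set of $G$, and a $\gamma_p(G)$-set is a $p$-dominating set of cardinality $\gamma_p(G)$. For $D\subseteq V(G)$ write $D_i=V_i\cap D$ for $i\in N_t$ and $I_D=\{i\in N_t: |D_i|=|V_i|\}$. *)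

From mathcomp Require Import all_boot all_order.
Set Implicit Arguments. Unset Strict Implicit. Unset Printing Implicit Defensive.

Definition p_dominating (V : finType) (adj : rel V) (p : nat) (S : {set V}) : bool :=
  [forall v, (v \notin S) ==> (p <= #|[set u in S | adj v u]|)].

(* gamma_p(G): the minimum cardinality of a p-dominating set
   (V itself is always p-dominating, so #|V| is a valid default). *)
Definition gamma_p (V : finType) (adj : rel V) (p : nat) : nat :=
  \big[minn/#|V|]_(S : {set V} | p_dominating adj p S) #|S|.

Definition gamma_p_set (V : finType) (adj : rel V) (p : nat) (D : {set V}) : Prop :=
  p_dominating adj p D /\ #|D| = gamma_p adj p.

(* Complete t-partite graph K_{n_1,...,n_t}: vertices are pairs (i, k) with
   i : 'I_t the part and k : 'I_(n i); part V_i = vertices with tag i. *)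
Definition cmp_vertex (t : nat) (n : 'I_t -> nat) : finType := {i : 'I_t & 'I_(n i)}.

Definition cmp_adj (t : nat) (n : 'I_t -> nat) : rel (cmp_vertex n) :=
  fun u v => tag u != tag v.

Definition fsum (t : nat) (n : 'I_t -> nat) (I : {set 'I_t}) : nat :=
  \sum_(i in I) n i.

Definition Dpart (t : nat) (n : 'I_t -> nat) (D : {set cmp_vertex n}) (i : 'I_t)
  : {set cmp_vertex n} := [set x in D | tag x == i].

Definition ID (t : nat) (n : 'I_t -> nat) (D : {set cmp_vertex n}) : {set 'I_t} :=
  [set i | #|Dpart D i| == n i].

(* min { f(I) : I ⊆ N_t, f(I) >= p }  (f(N_t) is a valid default when f(N_t) > p) *)
Definition min_f (t : nat) (n : 'I_t -> nat) (p : nat) : nat :=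
  \big[minn/fsum n setT]_(I : {set 'I_t} | p <= fsum n I) fsum n I.

From mathcomp Require Import all_boot all_order.
Set Implicit Arguments. Unset Strict Implicit.

(* For I with f(I) >= p, the union of the parts V_i (i in I) is p-dominating,
   since every outside vertex is adjacent to all of it; this gives the upper
   bound.  Conversely that union over I_D lies in D, so f(I_D) <= |D|. *)

Lemma bigmin_leq (I : eqType) (s : seq I) (P : pred I) (F : I -> nat) a j :
  j \in s -> P j -> \big[minn/a]_(i <- s | P i) F i <= F j.
Proof.
elim: s => // x s IHs; rewrite in_cons big_cons => /orP[/eqP-> ->|js Pj].
  exact: geq_minl.
case: (P x); last exact: IHs.
exact: leq_trans (geq_minr _ _) (IHs js Pj).
Qed.

Lemma gamma_p_leq (V : finType) (adj : rel V) p (S : {set V}) :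
  p_dominating adj p S -> gamma_p adj p <= #|S|.
Proof. by move=> domS; apply: bigmin_leq; rewrite ?mem_index_enum. Qed.

Section CompleteMultipartite.
Variables (t : nat) (n : 'I_t -> nat).

Definition partset (I : {set 'I_t}) : {set cmp_vertex n} := [set x | tag x \in I].

Lemma card_part (i : 'I_t) : #|[set x : cmp_vertex n | tag x == i]| = n i.
Proof.
have -> : [set x : cmp_vertex n | tag x == i] =
          @Tagged _ i (fun j => 'I_(n j)) @: setT.
  apply/setP => x; rewrite inE; apply/eqP/imsetP => [|[y _ ->] //].
  by case: x => j y /= <-; exists y.
by rewrite card_imset ?cardsT ?card_ord //; apply: eq_from_Tagged.
Qed.

Lemma card_partset I : #|partset I| = fsum n I.
Proof.
rewrite -sum1_card (partition_big (fun x : cmp_vertex n => tag x) (mem I));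
  last by move=> x; rewrite inE.
apply: eq_bigr => i iI; rewrite -card_part -sum1_card.
by apply: eq_bigl => x; rewrite !inE; case: eqP => [->|]; rewrite ?iI ?andbF ?andbT.
Qed.

Lemma partset_dominating p I :
  p <= fsum n I -> p_dominating (@cmp_adj t n) p (partset I).
Proof.
move=> pI; apply/forallP => v; apply/implyP; rewrite inE => vI.
have -> : [set u in partset I | cmp_adj v u] = partset I.
  apply/setP => u; rewrite !inE /cmp_adj andb_idr // => uI.
  by apply: contraNneq vI => ->.
by rewrite card_partset.
Qed.

Lemma min_f_leq p I : p <= fsum n I -> min_f n p <= fsum n I.
Proof. by move=> pI; apply: bigmin_leq; rewrite ?mem_index_enum. Qed.

Lemma gamma_p_leq_min_f p :
  p <= fsum n setT -> gamma_p (@cmp_adj t n) p <= min_f n p.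
Proof.
move=> pT; apply: (big_ind (fun m => gamma_p (@cmp_adj t n) p <= m)).
- by rewrite -card_partset; apply/gamma_p_leq/partset_dominating.
- by move=> a b ha hb; rewrite leq_min ha hb.
- by move=> I pI; rewrite -card_partset; apply/gamma_p_leq/partset_dominating.
Qed.

Lemma partset_ID_subset (D : {set cmp_vertex n}) : partset (ID D) \subset D.
Proof.
apply/subsetP => x; rewrite !inE => /eqP fullx.
have sub : Dpart D (tag x) \subset [set y : cmp_vertex n | tag y == tag x].
  by apply/subsetP => y; rewrite !inE => /andP[].
have Deq := subset_cardP (etrans fullx (esym (card_part _))) sub.
have : x \in [set y : cmp_vertex n | tag y == tag x] by rewrite inE.
by rewrite -Deq inE => /andP[].
Qed.

End CompleteMultipartite.

Theorem lemma2 (t : nat) (n : 'I_t -> nat) (p : nat) :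
  2 <= t ->
  (forall i, 0 < n i) ->
  0 < p ->
  p < fsum n setT ->
  gamma_p (@cmp_adj t n) p <= min_f n p /\
  ((exists D : {set cmp_vertex n},
       gamma_p_set (@cmp_adj t n) p D /\ p <= fsum n (ID D)) ->
   gamma_p (@cmp_adj t n) p = min_f n p).
Proof.
move=> _ _ _ /ltnW pT; have upper := gamma_p_leq_min_f pT.
split=> // -[D [[_ cardD] pID]].
apply/eqP; rewrite eqn_leq upper -cardD /=.
apply: leq_trans (min_f_leq pID) _.
by rewrite -card_partset subset_leq_card ?partset_ID_subset.
Qed.
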